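(* Let $\mathcal{T}:L^2(\mathbb{R})\to L^2(\mathbb{R})$ be a nonzero self-adjoint Hilbert–Schmidt operator, $\mathcal{T} = \sum_{k\in\mathbb{N}}\lambda_k v_kv_k^*$ with $(v_k)$ an orthonormal basis of $L^2(\mathbb{R})$ and real eigenvalues ordered so that $\|\mathcal{T}\| = |\lambda_1|>0$. Suppose $\lambda_1>0$ and that for some $0<\gamma\le1$, $\lambda_1 - |\lambda_k|\ge\gamma\lambda_1$ for all $k>1$. Given $u_0\in L^2(\mathbb{R})$, define $u_{k+1} = \mathcal{T}u_k/\|\mathcal{T}u_k\|_{L^2(\mathbb{R})}$. If $|\langle v_1,u_0\rangle_{L^2}|\ge\eta>0$, then for every $k\ge1$, $$\big\|u_k - \mathrm{sign}(\langle v_1,u_0\rangle)v_1\big\|_{L^2}^2\le 2(1-\gamma)^{2k}\frac{\|u_0\|_{L^2}^2}{\eta^2}.$$ Moreover, if in addition $k\ge \frac{\log(\eta/4\|u_0\|_{L^2})}{\log(1-\gamma)}$, then $$\Big\|\sqrt{\langle u_k,\mathcal{T}u_k\rangle}\,u_k - \sqrt{\lambda_1}\,\mathrm{sign}(\langle v_1,u_0\rangle)v_1\Big\|_{L^2}^2\le 18\lambda_1(1-\gamma)^{2k}\frac{\|u_0\|_{L^2}^2}{\eta^2}.$$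
   Context: $v_kv_k^*$ denotes the rank-one operator $h\mapsto v_k\langle v_k,h\rangle$. *)

From HB Require Import structures.
From mathcomp Require Import all_boot all_order all_algebra.
From mathcomp Require Import all_classical all_reals all_analysis.
Set Implicit Arguments. Unset Strict Implicit. Unset Printing Implicit Defensive.
Import Order.TTheory GRing.Theory Num.Theory numFieldNormedType.Exports.
Local Open Scope classical_set_scope.
Local Open Scope ring_scope.

(* Real L^2(R) w.r.t. Lebesgue measure, represented by (a.e.-classes of)
   functions R -> R. *)
Section L2.
Variable R : realType.

Definition leb := @lebesgue_measure R.

Definition L2 (f : R -> R) : Prop :=
  measurable_fun setT f /\ leb.-integrable setT (fun x => ((f x) ^+ 2)%:E).

Definition ip (f g : R -> R) : R := Rintegral leb setT (fun x => f x * g x).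

Definition nrm (f : R -> R) : R := Num.sqrt (ip f f).

Definition fsub (f g : R -> R) : R -> R := fun x => f x - g x.
Definition fscale (a : R) (f : R -> R) : R -> R := fun x => a * f x.
Definition fsum (n : nat) (F : nat -> R -> R) : R -> R :=
  fun x => \sum_(i < n) F i x.

Definition ONB (v : nat -> R -> R) : Prop :=
  (forall k, L2 (v k)) /\
  (forall i j, ip (v i) (v j) = (if i == j then 1 else 0)) /\
  (forall f, L2 f ->
     (fun n : nat => nrm (fsub f (fsum n (fun k => fscale (ip (v k) f) (v k)))))
       @ \oo --> (0 : R)).

Definition spectral_decomp (T : (R -> R) -> (R -> R)) (lam : nat -> R)
  (v : nat -> R -> R) : Prop :=
  forall f, L2 f -> L2 (T f) /\
    (fun n : nat =>
       nrm (fsub (T f) (fsum n (fun k => fscale (lam k * ip (v k) f) (v k)))))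
      @ \oo --> (0 : R).

Definition HS_eigs (lam : nat -> R) : Prop :=
  exists M : R, forall n, \sum_(k < n) lam k ^+ 2 <= M.

Fixpoint power_iter (T : (R -> R) -> (R -> R)) (u0 : R -> R) (n : nat)
  : R -> R :=
  match n with
  | 0 => u0
  | n'.+1 => let w := T (power_iter T u0 n') in fun x => w x / nrm w
  end.

End L2.

(* In the eigenbasis the iterate [u k] is [T^k u0] normalised, so its coefficients are
   proportional to [lam j ^+ k * <v j, u0>]; by the spectral gap each of them with [j > 0]
   is, relative to the first one, at most [(1 - gamma)^k nrm u0 / eta].  Hence the alignment
   [t = sign <v 0, u0> * <v 0, u k>] lies in (0, 1] with
   [1 - t^2 <= (1 - gamma)^(2k) nrm u0^2 / eta^2], and both errors are controlled by [1 - t^2]: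
   [nrm (u k - s v 0)^2 = 2 (1 - t)], while the Rayleigh quotient [mu = <u k, T u k>] satisfies
   [lam 0 - 2 lam 0 (1 - t^2) <= mu <= lam 0], which yields
   [nrm (sqrt mu u k - sqrt (lam 0) s v 0)^2 <= 4 lam 0 (1 - t^2)]. *)

From mathcomp Require Import all_boot all_order all_algebra.
From mathcomp Require Import all_classical all_reals all_analysis.
From mathcomp Require Import ring lra.
Set Implicit Arguments. Unset Strict Implicit. Unset Printing Implicit Defensive.
Import Order.TTheory GRing.Theory Num.Theory numFieldNormedType.Exports.
Import measurable_realfun.
Local Open Scope classical_set_scope.
Local Open Scope ring_scope.

Section RealInequalities.
Variable R : realFieldType.

Lemma sqr_le_of_quadratic_ge0 (A B C : R) : 0 <= C ->
  (forall t, 0 <= A - 2 * t * B + t ^+ 2 * C) -> B ^+ 2 <= A * C.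
Proof.
move=> C0 H; have [C_0|Cn0] := eqVneq C 0.
  have [->|Bn0] := eqVneq B 0; first by rewrite C_0 expr0n mulr0.
  have := H ((A + 1) / (2 * B)); rewrite C_0 mulr0 addr0.
  have -> : 2 * ((A + 1) / (2 * B)) * B = A + 1 by field.
  lra.
have Cgt0 : 0 < C by rewrite lt_def Cn0.
have := H (B / C).
have -> : A - 2 * (B / C) * B + (B / C) ^+ 2 * C = A - B ^+ 2 / C by field.
by rewrite subr_ge0 ler_pdivrMr.
Qed.

Lemma cosine_rule_le (a b t : R) : 0 <= a <= b -> 0 <= t <= 1 ->
  b ^+ 2 - a ^+ 2 <= 2 * b ^+ 2 * (1 - t ^+ 2) ->
  a ^+ 2 - 2 * a * b * t + b ^+ 2 <= 4 * b ^+ 2 * (1 - t ^+ 2).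
Proof.
move=> /andP[a_ge0 a_le_b] /andP[t_ge0 t_le1] sqr_gap.
have -> : a ^+ 2 - 2 * a * b * t + b ^+ 2 = (b - a) ^+ 2 + 2 * (a * b) * (1 - t) by ring.
have : (b - a) ^+ 2 <= b ^+ 2 - a ^+ 2 by nra.
have : a * b * (1 - t) <= b ^+ 2 * (1 - t ^+ 2).
  apply: (@le_trans _ _ (b ^+ 2 * (1 - t))).
    by rewrite expr2 ler_wpM2r ?subr_ge0 // ler_wpM2r // (le_trans a_ge0).
  by rewrite ler_wpM2l ?sqr_ge0 //; nra.
lra.
Qed.

End RealInequalities.

Section SquareIntegrable.
Variable R : realType.
Implicit Types (f g h : R -> R) (a b : R).

Local Notation integrable f := ((@leb R).-integrable setT (EFin \o f)).

Lemma L2_measurable f : L2 f -> measurable_fun setT f.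
Proof. by case. Qed.

Lemma L2_integrable_sqr f : L2 f -> integrable (fun x => f x ^+ 2).
Proof. by case. Qed.

Lemma integrable_le f g : measurable_fun setT f ->
  (forall x, `|f x| <= `|g x|) -> integrable g -> integrable f.
Proof.
move=> mf fg ig; apply: (le_integrable measurableT _ _ ig) => //.
  exact/measurable_EFinP.
by move=> x _; rewrite /= lee_fin.
Qed.

Lemma integrable_sqrD f g : L2 f -> L2 g -> integrable (fun x => f x ^+ 2 + g x ^+ 2).
Proof. by move=> /L2_integrable_sqr + /L2_integrable_sqr; exact: integrableD. Qed.

Lemma L2_integrable_mul f g : L2 f -> L2 g -> integrable (fun x => f x * g x).
Proof.
move=> Lf Lg; apply: integrable_le (integrable_sqrD Lf Lg).
  by apply: measurable_funM; exact: L2_measurable.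
move=> x; rewrite [`|_ + _|]ger0_norm ?addr_ge0 ?sqr_ge0 // ler_norml.
have := sqr_ge0 (f x - g x); have := sqr_ge0 (f x + g x).
by move=> h1 h2; apply/andP; split; nra.
Qed.

Lemma L2D f g : L2 f -> L2 g -> L2 (fun x => f x + g x).
Proof.
move=> Lf Lg; split; first by apply: measurable_funD; exact: L2_measurable.
apply: integrable_le (integrableZl measurableT 2 (integrable_sqrD Lf Lg)).
  by apply: measurable_funX; apply: measurable_funD; exact: L2_measurable.
move=> x; rewrite ger0_norm ?sqr_ge0 // ger0_norm ?mulr_ge0 ?addr_ge0 ?sqr_ge0 //.
by have := sqr_ge0 (f x - g x); nra.
Qed.

Lemma L2Z a f : L2 f -> L2 (fscale a f).
Proof.
move=> Lf; split; first by apply: measurable_funM => //; exact: L2_measurable.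
apply: eq_integrable (integrableZl measurableT (a ^+ 2) (L2_integrable_sqr Lf)) => //.
by move=> x _; rewrite /fscale /= exprMn.
Qed.

Lemma L2B f g : L2 f -> L2 g -> L2 (fsub f g).
Proof.
move=> Lf /(L2Z (-1)) /(L2D Lf); congr L2.
by apply: funext => x; rewrite /fscale /fsub mulN1r.
Qed.

Lemma L2_0 : L2 (fun _ : R => 0).
Proof.
split; first exact: measurable_cst.
apply: (eq_integrable measurableT (cst 0%E)); last exact: integrable0.
by move=> x _; rewrite /= expr0n.
Qed.

Lemma fsumS n (F : nat -> R -> R) : fsum n.+1 F = (fun x => fsum n F x + F n x).
Proof. by apply: funext => x; rewrite /fsum big_ord_recr. Qed.

Lemma fsum0 (F : nat -> R -> R) : fsum 0 F = (fun _ => 0).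
Proof. by apply: funext => x; rewrite /fsum big_ord0. Qed.

Lemma L2_fsum n (F : nat -> R -> R) : (forall i, L2 (F i)) -> L2 (fsum n F).
Proof.
move=> LF; elim: n => [|n IH]; first by rewrite fsum0; exact: L2_0.
by rewrite fsumS; exact: L2D.
Qed.

Lemma ipC f g : ip f g = ip g f.
Proof. by rewrite /ip; congr Rintegral; apply: funext => x; rewrite mulrC. Qed.

Lemma ipDl f g h : L2 f -> L2 g -> L2 h -> ip (fun x => f x + g x) h = ip f h + ip g h.
Proof.
move=> Lf Lg Lh; rewrite /ip -RintegralD ?L2_integrable_mul //.
by congr Rintegral; apply: funext => x; rewrite mulrDl.
Qed.

Lemma ipBl f g h : L2 f -> L2 g -> L2 h -> ip (fsub f g) h = ip f h - ip g h.
Proof.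
move=> Lf Lg Lh; rewrite /ip -RintegralB ?L2_integrable_mul //.
by congr Rintegral; apply: funext => x; rewrite mulrBl.
Qed.

Lemma ipZl a f h : L2 f -> L2 h -> ip (fscale a f) h = a * ip f h.
Proof.
move=> Lf Lh; rewrite /ip -RintegralZl ?L2_integrable_mul //.
by congr Rintegral; apply: funext => x; rewrite /fscale mulrA.
Qed.

Lemma ipBr f g h : L2 f -> L2 g -> L2 h -> ip h (fsub f g) = ip h f - ip h g.
Proof. by move=> *; rewrite ipC ipBl // ipC (ipC g). Qed.

Lemma ipZr a f h : L2 f -> L2 h -> ip h (fscale a f) = a * ip h f.
Proof. by move=> *; rewrite ipC ipZl // ipC. Qed.

Lemma ip0l h : ip (fun _ => 0) h = 0.
Proof.
rewrite /ip (_ : (fun x => 0 * h x) = cst 0); last by apply: funext => x; rewrite mul0r.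
by rewrite Rintegral_cst // mul0r.
Qed.

Lemma ip_fsuml n (F : nat -> R -> R) h : (forall i, L2 (F i)) -> L2 h ->
  ip (fsum n F) h = \sum_(i < n) ip (F i) h.
Proof.
move=> LF Lh; elim: n => [|n IH]; first by rewrite fsum0 big_ord0 ip0l.
rewrite fsumS ipDl ?L2_fsum //; last exact: L2_fsum.
by rewrite big_ord_recr /= -IH.
Qed.

Lemma ip_ge0 f : 0 <= ip f f.
Proof. by apply: Rintegral_ge0 => x _; rewrite -expr2 sqr_ge0. Qed.

Lemma nrm_sqr f : nrm f ^+ 2 = ip f f.
Proof. by rewrite /nrm sqr_sqrtr // ip_ge0. Qed.

Lemma nrm_sqr_subZ a b f g : L2 f -> L2 g ->
  nrm (fsub (fscale a f) (fscale b g)) ^+ 2 =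
  a ^+ 2 * ip f f - 2 * a * b * ip f g + b ^+ 2 * ip g g.
Proof.
move=> Lf Lg; have Laf := L2Z a Lf; have Lbg := L2Z b Lg.
rewrite nrm_sqr ipBl //; last exact: L2B.
rewrite !ipBr // !ipZl // !ipZr // (ipC g f); ring.
Qed.

Lemma ip_sqr_le f g : L2 f -> L2 g -> ip f g ^+ 2 <= ip f f * ip g g.
Proof.
move=> Lf Lg; apply: sqr_le_of_quadratic_ge0 (ip_ge0 g) _ => t.
have := ip_ge0 (fsub (fscale 1 f) (fscale t g)).
by rewrite -nrm_sqr nrm_sqr_subZ // expr1n mul1r mulr1 mulrAC.
Qed.

Lemma normr_ip_le f g : L2 f -> L2 g -> `|ip f g| <= nrm f * nrm g.
Proof.
move=> Lf Lg; rewrite /nrm -sqrtrM ?ip_ge0 // -sqrtr_sqr.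
by apply: ler_wsqrtr; exact: ip_sqr_le.
Qed.

End SquareIntegrable.

Section OrthonormalBasis.
Variables (R : realType) (v : nat -> R -> R).
Hypothesis v_ONB : ONB v.
Implicit Types (f g : R -> R) (b : nat -> R).

Definition coef f k := ip (v k) f.

Definition expansion n b := fsum n (fun k => fscale (b k) (v k)).

Lemma L2_basis k : L2 (v k).
Proof. by case: v_ONB. Qed.

Lemma ip_basis i j : ip (v i) (v j) = (i == j)%:R.
Proof. by case: v_ONB => _ [-> _]; case: eqP. Qed.

Lemma ip_basis_diag k : ip (v k) (v k) = 1.
Proof. by rewrite ip_basis eqxx. Qed.

Lemma nrm_basis k : nrm (v k) = 1.
Proof. by rewrite /nrm ip_basis_diag sqrtr1. Qed.

Lemma L2_expansion n b : L2 (expansion n b).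
Proof. by apply: L2_fsum => i; apply: L2Z; exact: L2_basis. Qed.

#[local] Hint Resolve L2_basis L2_expansion : core.

Lemma coef_expansion n b j : coef (expansion n b) j = if (j < n)%N then b j else 0.
Proof.
rewrite /coef ipC ip_fsuml // => [|i]; last exact: L2Z.
under eq_bigr do rewrite ipZl // ip_basis mulr_natr mulrb.
rewrite -big_mkcond /=; case: ltnP => [jn|nj].
  by rewrite (big_pred1 (Ordinal jn)) // => i; rewrite -val_eqE.
rewrite big_pred0 // => i; apply/negbTE; rewrite neq_ltn.
by rewrite (leq_trans (ltn_ord i) nj).
Qed.

Lemma ip_expansion_l n b g : L2 g -> ip (expansion n b) g = \sum_(i < n) b i * coef g i.
Proof.
move=> Lg; rewrite ip_fsuml // => [|i]; last exact: L2Z.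
by apply: eq_bigr => i _; rewrite ipZl.
Qed.

Lemma coef_fsub f g k : L2 f -> L2 g -> coef (fsub f g) k = coef f k - coef g k.
Proof. by move=> Lf Lg; rewrite /coef ipBr. Qed.

Lemma coef_le_nrm k f : L2 f -> `|coef f k| <= nrm f.
Proof. by move=> Lf; rewrite -[nrm f]mul1r -(nrm_basis k) normr_ip_le. Qed.

Lemma nrm_residual_sqr n f : L2 f ->
  nrm (fsub f (expansion n (coef f))) ^+ 2 = ip f f - \sum_(i < n) coef f i ^+ 2.
Proof.
move=> Lf; have LS := L2_expansion n (coef f); set S := expansion n (coef f) in LS *.
have LfS : L2 (fsub f S) by exact: L2B.
have coef_residual i : (i < n)%N -> coef (fsub f S) i = 0.
  by move=> lt_in; rewrite coef_fsub // coef_expansion lt_in subrr.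
rewrite nrm_sqr ipBl // ip_expansion_l // big1 => [|i _]; last first.
  by rewrite coef_residual ?mulr0.
by rewrite subr0 ipBr // [ip f S]ipC ip_expansion_l.
Qed.

Lemma bessel n f : L2 f -> \sum_(i < n) coef f i ^+ 2 <= ip f f.
Proof. by move=> Lf; rewrite -subr_ge0 -nrm_residual_sqr // sqr_ge0. Qed.

Lemma parseval f g : L2 f -> L2 g ->
  \sum_(i < n) coef f i * coef g i @[n --> \oo] --> ip f g.
Proof.
move=> Lf Lg; have [_ [_ /(_ f Lf) residual_cvg0]] := v_ONB.
have bound_cvg0 :
    nrm (fsub f (expansion n (coef f))) * nrm g @[n --> \oo] --> (0 : R).
  by rewrite -(mul0r (nrm g)); apply: cvgMr_tmp.
apply/subr_cvg0; apply: norm_cvg0; apply: squeeze_cvgr (cvg_cst 0) bound_cvg0.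
apply: nearW => n; rewrite normr_ge0 /= distrC.
rewrite -ip_expansion_l // -ipBl //; apply: normr_ip_le => //; exact: L2B.
Qed.

Lemma parseval_sqr f : L2 f -> \sum_(i < n) coef f i ^+ 2 @[n --> \oo] --> ip f f.
Proof. by move=> Lf; under eq_fun do under eq_bigr do rewrite expr2; exact: parseval. Qed.

Lemma ip_le_of_coef_scaled f g (w : nat -> R) (rho : R) : L2 f -> L2 g ->
  (forall j, coef g j = w j * coef f j) -> (forall j, (0 < j)%N -> `|w j| <= rho) ->
  ip g g <= coef g 0 ^+ 2 + rho ^+ 2 * ip f f.
Proof.
move=> Lf Lg coef_g w_le.
apply: ler_cvg_to (parseval_sqr Lg) (cvg_cst _) _; apply: nearW => -[|n] /=.
  by rewrite big_ord0 addr_ge0 ?sqr_ge0 // mulr_ge0 ?sqr_ge0 ?ip_ge0.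
rewrite big_ord_recl lerD2l.
apply: (@le_trans _ _ (rho ^+ 2 * \sum_(i < n) coef f (bump 0 i) ^+ 2)).
  rewrite mulr_sumr; apply: ler_sum => i _; rewrite coef_g exprMn.
  rewrite ler_wpM2r ?sqr_ge0 //.
  by have := w_le _ (ltn0Sn i); rewrite ler_norml => /andP[? ?]; nra.
rewrite ler_wpM2l ?sqr_ge0 //; apply: le_trans (bessel n.+1 Lf).
by rewrite [leRHS]big_ord_recl; apply: ler_wpDl; [exact: sqr_ge0 | exact: lexx].
Qed.

End OrthonormalBasis.

Section SpectralDecomposition.
Variables (R : realType) (T : (R -> R) -> R -> R) (lam : nat -> R) (v : nat -> R -> R).
Hypotheses (v_ONB : ONB v) (T_spectral : spectral_decomp T lam v).
Implicit Types f u : R -> R.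

Let L2_v := L2_basis v_ONB.
Let L2_vsum := L2_expansion v_ONB.
#[local] Hint Resolve L2_v L2_vsum : core.

Lemma L2_T f : L2 f -> L2 (T f).
Proof. by case/T_spectral. Qed.

Lemma coef_T f j : L2 f -> coef v (T f) j = lam j * coef v f j.
Proof.
move=> Lf; have [LTf] := T_spectral Lf; set b := fun k => lam k * coef v f k.
move=> T_cvg; apply/eqP; rewrite -subr_eq0 -normr_le0.
apply: ler_cvg_to (cvg_cst _) (T_cvg : nrm (fsub (T f) (expansion v n b)) @[n --> \oo] --> 0) _.
exists j.+1 => // n /= jn.
have -> : coef v (T f) j - lam j * coef v f j = coef v (fsub (T f) (expansion v n b)) j.
  by rewrite coef_fsub // coef_expansion // jn.
by apply: coef_le_nrm => //; exact: L2B.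
Qed.

Lemma ip_T_le u (M : R) : (forall j, lam j <= M) -> L2 u -> ip u (T u) <= M * ip u u.
Proof.
move=> lam_le Lu; have LTu := L2_T Lu.
apply: ler_cvg_to (parseval v_ONB Lu LTu) (cvgMl_tmp (parseval_sqr v_ONB Lu)) _.
apply: nearW => n; rewrite mulr_sumr; apply: ler_sum => j _.
by rewrite coef_T // mulrCA -expr2 ler_wpM2r ?sqr_ge0.
Qed.

Lemma ip_T_gap u : (forall j, `|lam j| <= lam 0) -> L2 u ->
  lam 0 * ip u u - ip u (T u) <= 2 * lam 0 * (ip u u - coef v u 0 ^+ 2).
Proof.
move=> lam_le Lu; have LTu := L2_T Lu.
apply: ler_cvg_to
  (cvgB (cvgMl_tmp (parseval_sqr v_ONB Lu)) (parseval v_ONB Lu LTu))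
  (cvgMl_tmp (cvgB (parseval_sqr v_ONB Lu) (cvg_cst (coef v u 0 ^+ 2)))) _.
exists 1%N => // -[//|n] _; rewrite !fctE.
rewrite mulr_sumr -sumrB.
rewrite (eq_bigr (fun i : 'I_n.+1 => (lam 0 - lam i) * coef v u i ^+ 2)) => [|i _]; last first.
  by rewrite coef_T //; ring.
rewrite !big_ord_recl subrr mul0r add0r addrAC subrr add0r mulr_sumr.
apply: ler_sum => j _; rewrite ler_wpM2r ?sqr_ge0 //.
by have := lam_le (bump 0 j); rewrite ler_norml => /andP[? ?]; lra.
Qed.

End SpectralDecomposition.

Section PowerIteration.
Variables (R : realType) (T : (R -> R) -> R -> R) (lam : nat -> R) (v : nat -> R -> R).
Variable u0 : R -> R.
Hypotheses (v_ONB : ONB v) (T_spectral : spectral_decomp T lam v) (L2_u0 : L2 u0).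
Hypotheses (lam0_gt0 : 0 < lam 0) (coef_u0_neq0 : coef v u0 0 != 0).

Local Notation u k := (power_iter T u0 k).

Let L2_v := L2_basis v_ONB.
#[local] Hint Resolve L2_v : core.

Definition power_iter_scale k := \prod_(i < k) nrm (T (u i)).

Lemma power_iterS k : u k.+1 = fscale (nrm (T (u k)))^-1 (T (u k)).
Proof. by apply: funext => x; rewrite /= /fscale mulrC. Qed.

Lemma L2_power_iter k : L2 (u k).
Proof. by elim: k => // k IH; rewrite power_iterS; apply/L2Z/(L2_T T_spectral). Qed.

#[local] Hint Resolve L2_power_iter : core.

Lemma power_iter_coef k : 0 < power_iter_scale k /\
  forall j, coef v (u k) j * power_iter_scale k = lam j ^+ k * coef v u0 j.
Proof.
(* Positivity is carried along: were [T (u k)] zero, [u k.+1] would be the junk value [0]. *)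
rewrite /power_iter_scale; elim: k => [|k [scale_gt0 IH]].
  by rewrite big_ord0; split=> // j; rewrite mulr1 expr0 mul1r.
have LTu := L2_T T_spectral (L2_power_iter k).
have coefS j : coef v (u k.+1) j = (nrm (T (u k)))^-1 * (lam j * coef v (u k) j).
  rewrite power_iterS [LHS]/coef ipZr // -/(coef v _ j).
  by rewrite (coef_T v_ONB T_spectral).
have nrm_Tu_gt0 : 0 < nrm (T (u k)).
  apply: (lt_le_trans _ (coef_le_nrm v_ONB 0 LTu)).
  rewrite (coef_T v_ONB T_spectral) // normr_gt0; apply: mulf_neq0; first exact: lt0r_neq0.
  apply: contra coef_u0_neq0 => /eqP coef_uk0; move: (IH 0%N).
  by rewrite coef_uk0 mul0r => /esym/eqP; rewrite mulf_eq0 expf_eq0 (gt_eqF lam0_gt0) andbF.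
split=> [|j]; first by rewrite big_ord_recr mulr_gt0.
rewrite big_ord_recr coefS /= exprS -mulrA -IH; field; exact: lt0r_neq0.
Qed.

Lemma power_iter_unit k : (0 < k)%N -> ip (u k) (u k) = 1.
Proof.
case: k => // k _; have LTu := L2_T T_spectral (L2_power_iter k).
have nrm_Tu_gt0 : 0 < nrm (T (u k)).
  have [+ _] := power_iter_coef k.+1.
  by rewrite /power_iter_scale big_ord_recr pmulr_rgt0 //; case: (power_iter_coef k).
have LsTu := L2Z (nrm (T (u k)))^-1 LTu.
rewrite power_iterS ipZl // ipZr // -nrm_sqr; field; exact: lt0r_neq0.
Qed.

Variables (gamma eta : R) (k : nat).
Hypotheses (lam_le : forall j, `|lam j| <= lam 0) (gamma_le1 : gamma <= 1)
  (gap : forall j, (0 < j)%N -> gamma * lam 0 <= lam 0 - `|lam j|)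
  (eta_gt0 : 0 < eta) (eta_le : eta <= `|coef v u0 0|) (k_gt0 : (0 < k)%N).

Let sgn0 := Num.sg (coef v u0 0).
Let alignment := sgn0 * coef v (u k) 0.
Let err := (1 - gamma) ^+ (2 * k) * nrm u0 ^+ 2 / eta ^+ 2.

Lemma sgn0_sqr : sgn0 ^+ 2 = 1.
Proof. by rewrite sqr_sg coef_u0_neq0. Qed.

Lemma alignment_scale : alignment * power_iter_scale k = lam 0 ^+ k * `|coef v u0 0|.
Proof. by rewrite -mulrA (proj2 (power_iter_coef k)) mulrCA -normrEsg. Qed.

Lemma alignment_gt0 : 0 < alignment.
Proof.
have [scale_gt0 _] := power_iter_coef k.
by rewrite -(pmulr_lgt0 _ scale_gt0) alignment_scale mulr_gt0 ?exprn_gt0 ?normr_gt0.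
Qed.

Lemma alignment_le1 : alignment <= 1.
Proof.
rewrite (le_trans (ler_norm _)) // normrM normr_sg coef_u0_neq0 mul1r.
by have := coef_le_nrm v_ONB 0 (L2_power_iter k); rewrite /nrm power_iter_unit // sqrtr1.
Qed.

Lemma one_sub_alignment_sqr_le : 1 - alignment ^+ 2 <= err.
Proof.
have [scale_gt0 coef_uk] := power_iter_coef k; set Q := power_iter_scale k in scale_gt0 coef_uk.
have Q_ge : lam 0 ^+ k * eta <= Q.
  apply: le_trans (ler_wpM2l (exprn_ge0 k (ltW lam0_gt0)) eta_le) _.
  by rewrite -alignment_scale ger_pMl // alignment_le1.
pose rho := (1 - gamma) ^+ k / eta.
have w_le j : (0 < j)%N -> `|lam j ^+ k / Q| <= rho.
  move=> j_gt0; rewrite normrM normrX [`|Q^-1|]gtr0_norm ?invr_gt0 // ler_pdivrMr //.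
  apply: (@le_trans _ _ (((1 - gamma) * lam 0) ^+ k)).
    have lamj_le : `|lam j| <= (1 - gamma) * lam 0 by have := gap j_gt0; lra.
    by rewrite lerXn2r ?nnegrE // (le_trans _ lamj_le).
  rewrite exprMn /rho -mulrA ler_wpM2l ?exprn_ge0 ?subr_ge0 //.
  by rewrite ler_pdivlMl // mulrC.
have coef_uk_u0 j : coef v (u k) j = lam j ^+ k / Q * coef v u0 j.
  by rewrite mulrAC -coef_uk mulfK // lt0r_neq0.
have := ip_le_of_coef_scaled v_ONB L2_u0 (L2_power_iter k) coef_uk_u0 w_le.
have -> : rho ^+ 2 * ip u0 u0 = err.
  by rewrite /err /rho -nrm_sqr mulnC exprM expr_div_n mulrAC.
by rewrite power_iter_unit // /alignment exprMn sgn0_sqr mul1r; lra.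
Qed.

Lemma power_iter_dist : nrm (fsub (u k) (fscale sgn0 (v 0))) ^+ 2 <= 2 * err.
Proof.
have -> : u k = fscale 1 (u k) by apply: funext => x; rewrite /fscale mul1r.
rewrite nrm_sqr_subZ // power_iter_unit // (ip_basis_diag v_ONB) sgn0_sqr ipC -/(coef v _ 0).
have := one_sub_alignment_sqr_le; have := alignment_le1; have := alignment_gt0.
rewrite /alignment; nra.
Qed.

Lemma power_iter_eig_dist :
  nrm (fsub (fscale (Num.sqrt (ip (u k) (T (u k)))) (u k))
            (fscale (Num.sqrt (lam 0) * sgn0) (v 0))) ^+ 2 <= 4 * lam 0 * err.
Proof.
set mu := ip (u k) (T (u k)); set a := Num.sqrt mu; set b := Num.sqrt (lam 0).
have b_sqr : b ^+ 2 = lam 0 by rewrite sqr_sqrtr // ltW.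
have ip_uk := power_iter_unit k_gt0; have L2_uk := L2_power_iter k.
have mu_le : mu <= lam 0.
  rewrite -[leRHS]mulr1 -ip_uk; apply: (ip_T_le v_ONB T_spectral _ L2_uk) => j.
  exact: le_trans (ler_norm _) (lam_le j).
have mu_gap : lam 0 - mu <= 2 * lam 0 * (1 - alignment ^+ 2).
  have := ip_T_gap v_ONB T_spectral lam_le L2_uk.
  by rewrite ip_uk mulr1 /alignment exprMn sgn0_sqr mul1r.
have mu_le_a_sqr : mu <= a ^+ 2.
  have [mu_ge0|/ltW mu_le0] := lerP 0 mu; first by rewrite sqr_sqrtr.
  by rewrite /a ler0_sqrtr // expr0n.
have cosine_le : a ^+ 2 - 2 * a * b * alignment + b ^+ 2 <= 4 * b ^+ 2 * (1 - alignment ^+ 2).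
  apply: cosine_rule_le; first by rewrite sqrtr_ge0 ler_wsqrtr.
    by rewrite ltW ?alignment_gt0 ?alignment_le1.
  by rewrite b_sqr; lra.
rewrite nrm_sqr_subZ // ip_uk (ip_basis_diag v_ONB) ipC -/(coef v _ 0) exprMn sgn0_sqr.
have -> : a ^+ 2 * 1 - 2 * a * (b * sgn0) * coef v (u k) 0 + b ^+ 2 * 1 * 1 =
  a ^+ 2 - 2 * a * b * alignment + b ^+ 2 by rewrite /alignment; ring.
apply: le_trans cosine_le _; rewrite b_sqr -!mulrA ler_wpM2l //.
by rewrite ler_wpM2l ?one_sub_alignment_sqr_le // ltW.
Qed.

End PowerIteration.

Theorem mainTheorem8 (R : realType) (T : (R -> R) -> (R -> R))
  (lam : nat -> R) (v : nat -> R -> R) (gamma eta : R) (u0 : R -> R) :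
  ONB v ->
  spectral_decomp T lam v ->
  HS_eigs lam ->
  0 < lam 0%N ->
  (forall k, `|lam k| <= lam 0%N) ->
  0 < gamma -> gamma <= 1 ->
  (forall k, (0 < k)%N -> lam 0%N - `|lam k| >= gamma * lam 0%N) ->
  L2 u0 ->
  0 < eta -> `|ip (v 0%N) u0| >= eta ->
  let s := Num.sg (ip (v 0%N) u0) in
  forall k : nat, (1 <= k)%N ->
    nrm (fsub (power_iter T u0 k) (fscale s (v 0%N))) ^+ 2
      <= 2 * (1 - gamma) ^+ (2 * k) * nrm u0 ^+ 2 / eta ^+ 2
    /\
    (k%:R >= ln (eta / (4 * nrm u0)) / ln (1 - gamma) ->
     nrm (fsub (fscale (Num.sqrt (ip (power_iter T u0 k) (T (power_iter T u0 k))))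
                       (power_iter T u0 k))
               (fscale (Num.sqrt (lam 0%N) * s) (v 0%N))) ^+ 2
       <= 18 * lam 0%N * (1 - gamma) ^+ (2 * k) * nrm u0 ^+ 2 / eta ^+ 2).
Proof.
move=> v_ONB T_spectral _ lam0_gt0 lam_le _ gamma_le1 gap L2_u0 eta_gt0 eta_le s k k_gt0.
have coef_u0_neq0 : coef v u0 0 != 0 by rewrite -normr_gt0 (lt_le_trans eta_gt0 eta_le).
split.
  have := power_iter_dist v_ONB T_spectral L2_u0 lam0_gt0 coef_u0_neq0
            gamma_le1 gap eta_gt0 eta_le k_gt0.
  by rewrite !mulrA.
move=> _; apply: le_trans (power_iter_eig_dist v_ONB T_spectral L2_u0 lam0_gt0
                           coef_u0_neq0 lam_le gamma_le1 gap eta_gt0 eta_le k_gt0) _.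
set err := (1 - gamma) ^+ (2 * k) * nrm u0 ^+ 2 / eta ^+ 2.
have err_ge0 : 0 <= err.
  by rewrite divr_ge0 ?sqr_ge0 // mulr_ge0 ?sqr_ge0 ?exprn_ge0 ?subr_ge0.
have -> : 18 * lam 0 * (1 - gamma) ^+ (2 * k) * nrm u0 ^+ 2 / eta ^+ 2 = 18 * lam 0 * err.
  by rewrite /err !mulrA.
by rewrite ler_wpM2r //; lra.
Qed.
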